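(* Let $\alpha,\beta,b,d>0$, $d_2>0$, $\tau>0$, and let $\Gamma(x,y,a)$ be the Green's function described in the context. The principal eigenvalue $s_1$ of the nonlocal eigenvalue problem $s\psi=d_2\psi''-\alpha\psi+e^{-s\tau}\frac{b\beta}{d}\int_0^\pi\Gamma(x,y,\tau)\psi(y)\,dy$, $x\in(0,\pi)$, $\psi'(0)=\psi'(\pi)=0$, has the same sign as $\lambda_1=-\alpha+\frac{\beta b}{d e^{\alpha\tau}}$.
   Context: $\Gamma(x,y,a)$, $x,y\in[0,\pi]$, $a>0$, is the Green's function of $\partial_aW=d_2\partial_{xx}W-\alpha W$ on $(0,\pi)$ with Neumann conditions $\partial_xW(a,0)=\partial_xW(a,\pi)=0$, i.e. the solution with initial value $W_0$ is $\int_0^\pi\Gamma(x,y,a)W_0(y)\,dy$. The principal eigenvalue of the nonlocal problem is the eigenvalue associated with a strictly positive eigenfunction (its existence is known). *)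

From Stdlib Require Import Reals.
From Coquelicot Require Import Coquelicot.
Open Scope R_scope.

(* Neumann Green's function of  W_a = d2 W_xx - alpha W  on (0,pi):
   Gamma(x,y,a) = 1/pi * e^{-alpha a}
                  + 2/pi * sum_{n>=1} e^{-(d2 n^2 + alpha) a} cos(n x) cos(n y). *)
Definition green_coef (n : nat) : R := if Nat.eqb n 0 then 1 else 2.

Definition Gamma (d2 alpha : R) (x y a : R) : R :=
  Series (fun n : nat =>
    green_coef n / PI * exp (- (d2 * (INR n) ^ 2 + alpha) * a)
      * cos (INR n * x) * cos (INR n * y)).

Definition principal_eigenpair (alpha beta b d d2 tau : R)
    (s : R) (psi : R -> R) : Prop :=
  (forall x, 0 <= x <= PI -> ex_derive psi x /\ ex_derive (Derive psi) x) /\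
  (forall x, 0 <= x <= PI -> continuous (Derive_n psi 2) x) /\
  (forall x, 0 <= x <= PI -> 0 < psi x) /\
  Derive psi 0 = 0 /\ Derive psi PI = 0 /\
  (forall x, 0 < x < PI ->
     s * psi x = d2 * Derive_n psi 2 x - alpha * psi x
       + exp (- s * tau) * (b * beta / d)
         * RInt (fun y => Gamma d2 alpha x y tau * psi y) 0 PI).

From Stdlib Require Import Reals Lra Lia.
From Coquelicot Require Import Coquelicot.
Open Scope R_scope.

(* Integrate the eigenvalue equation over (0, pi).  The Neumann conditions kill the
   diffusion term, and the Green's function conserves mass up to decay:
   int_0^pi Gamma(x, y, tau) dx = e^{-alpha tau}.  With I = int psi > 0 this gives
   s = -alpha + e^{-s tau} L, L = (b beta / d) e^{-alpha tau}; as s + alpha - e^{-s tau} L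
   is increasing in s and equals -lambda1 at s = 0, s and lambda1 have the same sign.
   The mass identity comes from the cosine series of Gamma, which converges uniformly
   with geometric ratio e^{-d2 tau}: summation and integration may be exchanged, and
   only the n = 0 mode has nonzero mean over (0, pi). *)

Lemma is_lim_seq_scal_geom (C q : R) :
  0 <= q < 1 -> is_lim_seq (fun n => C * q ^ n) 0.
Proof.
  intros Hq.
  replace (Finite 0) with (Rbar_mult C 0) by (simpl; f_equal; ring).
  apply is_lim_seq_scal_l, is_lim_seq_geom.
  rewrite Rabs_pos_eq; lra.
Qed.

Lemma Rabs_le_geom_eq0 (z C q : R) :
  0 <= q < 1 -> (forall n, Rabs z <= C * q ^ n) -> z = 0.
Proof.
  intros Hq Hz.
  assert (Hle : Rbar_le (Rabs z) 0).
  { apply (is_lim_seq_le (fun _ => Rabs z) (fun n => C * q ^ n)); auto.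
    - apply is_lim_seq_const.
    - apply is_lim_seq_scal_geom; auto. }
  simpl in Hle. apply Rabs_eq_0. pose proof (Rabs_pos z). lra.
Qed.

Lemma series_tail_geom (t : nat -> R) (K q : R) :
  0 <= q < 1 -> (forall n, Rabs (t n) <= K * q ^ n) ->
  forall N, Rabs (Series t - sum_f_R0 t N) <= K * q ^ S N / (1 - q).
Proof.
  intros Hq Ht N.
  assert (Hq1 : Rabs q < 1) by (rewrite Rabs_pos_eq; lra).
  assert (Hgeom : forall c, ex_series (fun n => c * q ^ n)).
  { intros c. apply (ex_series_scal_l c (fun n => q ^ n)), ex_series_geom; auto. }
  assert (Hex : ex_series t) by (apply (ex_series_le t (fun n => K * q ^ n)); auto).
  assert (Htail : forall k, Rabs (t (S N + k)%nat) <= K * q ^ S N * q ^ k).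
  { intros k. rewrite Rmult_assoc, <- pow_add. apply Ht. }
  rewrite (Series_incr_n t (S N)) by (auto; lia). simpl Init.Nat.pred.
  replace (sum_f_R0 t N + Series (fun k => t (S N + k)%nat) - sum_f_R0 t N)
    with (Series (fun k => t (S N + k)%nat)) by ring.
  eapply Rle_trans; [apply Series_Rabs|].
  { apply (@ex_series_le R_AbsRing R_CompleteNormedModule _ (fun k => K * q ^ S N * q ^ k)); auto.
    intros k. rewrite Rabs_Rabsolu. apply Htail. }
  eapply Rle_trans; [apply (Series_le _ (fun k => K * q ^ S N * q ^ k)); auto|].
  { intros k. split; [apply Rabs_pos | apply Htail]. }
  rewrite (Series_scal_l _ (fun k => q ^ k)), (is_series_unique _ _ (is_series_geom q Hq1)).
  unfold Rdiv. lra.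
Qed.

Lemma is_RInt_geom_unif_limit (f : nat -> R -> R) (g : R -> R) (l : nat -> R) (a b C q : R) :
  a <= b -> 0 <= q < 1 ->
  (forall n, is_RInt (f n) a b (l n)) ->
  (forall n y, a <= y <= b -> Rabs (f n y - g y) <= C * q ^ n) ->
  exists L, is_RInt g a b L /\ forall n, Rabs (l n - L) <= (b - a) * (C * q ^ n).
Proof.
  intros Hab Hq Hf Hfg.
  (* [filterlim_RInt] needs uniform convergence on all of [R]: precompose with the
     clamp onto [a, b], which changes no integral over [a, b]. *)
  set (clamp := fun y => Rmax a (Rmin b y)).
  assert (Hclamp : forall y, a <= clamp y <= b).
  { intros y. unfold clamp. split; [apply Rmax_l|].
    apply Rmax_lub; [lra | apply Rmin_l]. }
  assert (Hclamp_id : forall y, Rmin a b < y < Rmax a b -> clamp y = y).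
  { intros y Hy. rewrite Rmin_left, Rmax_right in Hy by lra. unfold clamp.
    rewrite Rmin_right, Rmax_right; lra. }
  destruct (filterlim_RInt (fun n y => f n (clamp y)) a b eventually eventually_filter
              (fun y => g (clamp y)) l) as [L [_ HL]].
  - intros n. apply (is_RInt_ext (f n)); auto.
    intros y Hy. rewrite Hclamp_id; auto.
  - intros P [eps HP].
    destruct (proj2 (is_lim_seq_spec _ _) (is_lim_seq_scal_geom C q Hq) eps) as [N HN].
    exists N. intros n Hn. apply HP. intros y.
    change (Rabs (f n (clamp y) - g (clamp y)) < eps).
    specialize (HN n Hn). rewrite Rminus_0_r in HN.
    eapply Rle_lt_trans; [apply Hfg, Hclamp|].
    eapply Rle_lt_trans; [apply Rle_abs | exact HN].
  - assert (HgL : is_RInt g a b L).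
    { apply (is_RInt_ext (fun y => g (clamp y))); auto.
      intros y Hy. rewrite Hclamp_id; auto. }
    exists L. split; auto. intros n.
    assert (Hdiff : is_RInt (fun y => f n y - g y) a b (l n - L))
      by exact (is_RInt_minus _ _ _ _ _ _ (Hf n) HgL).
    rewrite <- (is_RInt_unique _ _ _ _ Hdiff).
    apply abs_RInt_le_const; auto. eexists; eauto.
Qed.

Lemma is_RInt_sum_f_R0 (h : nat -> R -> R) (l : nat -> R) (a b : R) (N : nat) :
  (forall n, is_RInt (h n) a b (l n)) ->
  is_RInt (fun y => sum_f_R0 (fun n => h n y) N) a b (sum_f_R0 l N).
Proof.
  intros Hh. induction N as [|N IH]; simpl; auto.
  exact (is_RInt_plus _ _ _ _ _ _ IH (Hh (S N))).
Qed.

Lemma is_RInt_cos_nat_mul (n : nat) : (0 < n)%nat -> is_RInt (fun x => cos (INR n * x)) 0 PI 0.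
Proof.
  intros Hn. assert (HnR : 0 < INR n) by (apply lt_0_INR; lia).
  set (F := fun x => sin (INR n * x) / INR n).
  assert (HF : is_RInt (fun x => cos (INR n * x)) 0 PI (minus (F PI) (F 0))).
  { apply (@is_RInt_derive R_CompleteNormedModule).
    - intros x _. unfold F. auto_derive; auto. field. lra.
    - intros x _. apply (ex_derive_continuous (fun x => cos (INR n * x))). auto_derive; auto. }
  replace (minus (F PI) (F 0)) with 0 in HF; auto.
  unfold F, minus, plus, opp; simpl.
  rewrite Rmult_0_r, sin_0, (sin_eq_0_1 (INR n * PI)).
  - field. lra.
  - exists (Z.of_nat n). rewrite <- INR_IZR_INZ. reflexivity.
Qed.

Lemma is_RInt_cos_poly (u : nat -> R) (N : nat) :
  is_RInt (fun x => sum_f_R0 (fun n => u n * cos (INR n * x)) N) 0 PI (u 0%nat * PI).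
Proof.
  replace (u 0%nat * PI) with (sum_f_R0 (fun n => match n with O => u 0%nat * PI | S _ => 0 end) N).
  - apply is_RInt_sum_f_R0. intros [|n].
    + apply (is_RInt_ext (fun _ => u 0%nat)).
      * intros x _. simpl. rewrite Rmult_0_l, cos_0. ring.
      * replace (u 0%nat * PI) with (scal (PI - 0) (u 0%nat)) by (rewrite Rminus_0_r; apply Rmult_comm).
        apply (@is_RInt_const R_NormedModule).
    + replace 0 with (scal (u (S n)) 0) at 2 by apply Rmult_0_r.
      apply (@is_RInt_scal R_NormedModule (fun x => cos (INR (S n) * x))), is_RInt_cos_nat_mul. lia.
  - induction N as [|N IH]; simpl; auto. rewrite IH. ring.
Qed.

Lemma exp_pow (x : R) (n : nat) : exp x ^ n = exp (INR n * x).
Proof.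
  induction n as [|n IH]; simpl.
  - rewrite Rmult_0_l, exp_0. reflexivity.
  - rewrite IH, <- exp_plus. f_equal. destruct n; simpl; ring.
Qed.

Lemma exp_le_mono (x y : R) : x <= y -> exp x <= exp y.
Proof. intros [Hlt | ->]; [left; apply exp_increasing; auto | lra]. Qed.

Definition green_weight (d2 alpha a : R) (n : nat) : R :=
  green_coef n / PI * exp (- (d2 * (INR n) ^ 2 + alpha) * a).

Definition green_term (d2 alpha x y a : R) (n : nat) : R :=
  green_weight d2 alpha a n * cos (INR n * x) * cos (INR n * y).

Lemma Gamma_Series (d2 alpha x y a : R) :
  Gamma d2 alpha x y a = Series (green_term d2 alpha x y a).
Proof. reflexivity. Qed.

Lemma green_term_bound (d2 alpha x y a : R) (n : nat) : 0 <= d2 -> 0 <= a ->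
  Rabs (green_term d2 alpha x y a n) <= 2 / PI * exp (- alpha * a) * exp (- d2 * a) ^ n.
Proof.
  intros Hd2 Ha.
  assert (HPI : 0 < / PI) by apply Rinv_0_lt_compat, PI_RGT_0.
  assert (Hcoef : Rabs (green_coef n / PI) <= 2 / PI).
  { unfold green_coef, Rdiv. rewrite Rabs_mult, (Rabs_pos_eq (/ PI)) by lra.
    apply Rmult_le_compat_r; [lra|].
    destruct (Nat.eqb n 0); rewrite Rabs_pos_eq; lra. }
  assert (Hexp : exp (- (d2 * INR n ^ 2 + alpha) * a) <= exp (- alpha * a) * exp (- d2 * a) ^ n).
  { rewrite exp_pow, <- exp_plus. apply exp_le_mono.
    assert (INR n <= INR n ^ 2).
    { destruct n as [|n]; [simpl; lra|].
      assert (1 <= INR (S n)) by (apply (le_INR 1); lia). nra. }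
    assert (0 <= d2 * a * (INR n ^ 2 - INR n)) by (apply Rmult_le_pos; nra).
    nra. }
  unfold green_term, green_weight.
  rewrite !Rabs_mult, (Rabs_pos_eq (exp _)) by apply Rlt_le, exp_pos.
  replace (2 / PI * exp (- alpha * a) * exp (- d2 * a) ^ n)
    with (2 / PI * (exp (- alpha * a) * exp (- d2 * a) ^ n) * 1 * 1) by ring.
  assert (Hcos : forall t, Rabs (cos t) <= 1) by (intros t; apply Rabs_le, COS_bound).
  pose proof (Rabs_pos (green_coef n / PI)).
  pose proof (Rlt_le _ _ (exp_pos (- (d2 * INR n ^ 2 + alpha) * a))).
  repeat apply Rmult_le_compat; auto using Rabs_pos, Rmult_le_pos.
Qed.

Lemma exp_neg_mul_bounds (u v : R) : 0 < u -> 0 < v -> 0 <= exp (- u * v) < 1.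
Proof.
  intros Hu Hv. split; [apply Rlt_le, exp_pos|].
  rewrite <- exp_0. apply exp_increasing. nra.
Qed.

Lemma Gamma_sub_partial_sum (d2 alpha x y a : R) (N : nat) : 0 < d2 -> 0 < a ->
  Rabs (Gamma d2 alpha x y a - sum_f_R0 (green_term d2 alpha x y a) N)
    <= 2 / PI * exp (- alpha * a) * exp (- d2 * a) ^ S N / (1 - exp (- d2 * a)).
Proof.
  intros Hd2 Ha. rewrite Gamma_Series.
  apply series_tail_geom; [apply exp_neg_mul_bounds; auto|].
  intros n. apply green_term_bound; lra.
Qed.

Definition cos_coef (psi : R -> R) (n : nat) : R :=
  RInt (fun y => cos (INR n * y) * psi y) 0 PI.

Section NeumannMass.

Variables (d2 alpha tau : R) (psi : R -> R).
Hypotheses (Hd2 : 0 < d2) (Htau : 0 < tau)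
  (Hpsi : forall y, 0 <= y <= PI -> continuous psi y).

Lemma is_RInt_green_term_mul (x : R) (n : nat) :
  is_RInt (fun y => green_term d2 alpha x y tau n * psi y) 0 PI
    (green_weight d2 alpha tau n * cos_coef psi n * cos (INR n * x)).
Proof.
  set (w := green_weight d2 alpha tau n * cos (INR n * x)).
  apply (is_RInt_ext (fun y => w * (cos (INR n * y) * psi y))).
  { intros y _. unfold w, green_term. simpl. ring. }
  replace (green_weight d2 alpha tau n * cos_coef psi n * cos (INR n * x))
    with (w * cos_coef psi n) by (unfold w; ring).
  apply (@is_RInt_scal R_NormedModule (fun y => cos (INR n * y) * psi y)).
  apply (@RInt_correct R_CompleteNormedModule), (@ex_RInt_continuous R_CompleteNormedModule).
  intros y Hy. rewrite Rmin_left, Rmax_right in Hy by (pose proof PI_RGT_0; lra).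
  apply (continuous_mult (fun y => cos (INR n * y)) psi); auto.
  apply (ex_derive_continuous (fun y => cos (INR n * y))). auto_derive; auto.
Qed.

Lemma RInt_Gamma_mul_geom_approx :
  exists C, forall x, exists Phi,
    is_RInt (fun y => Gamma d2 alpha x y tau * psi y) 0 PI Phi /\
    forall N, Rabs (sum_f_R0 (fun n => green_weight d2 alpha tau n * cos_coef psi n
                                       * cos (INR n * x)) N - Phi)
              <= C * exp (- d2 * tau) ^ N.
Proof.
  destruct (bounded_continuity psi 0 PI Hpsi) as [M HM].
  pose proof PI_RGT_0 as HPI.
  pose proof (exp_neg_mul_bounds d2 tau Hd2 Htau) as Hq.
  set (q := exp (- d2 * tau)) in *.
  set (C := M * (2 / PI * exp (- alpha * tau) * q / (1 - q))).
  exists (PI * C). intros x.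
  destruct (is_RInt_geom_unif_limit
              (fun N y => sum_f_R0 (fun n => green_term d2 alpha x y tau n * psi y) N)
              (fun y => Gamma d2 alpha x y tau * psi y)
              (fun N => sum_f_R0 (fun n => green_weight d2 alpha tau n * cos_coef psi n
                                           * cos (INR n * x)) N)
              0 PI C q) as [Phi [HPhi Hbound]]; auto.
  - lra.
  - intros N. apply is_RInt_sum_f_R0. intros n. apply is_RInt_green_term_mul.
  - intros N y Hy. rewrite <- scal_sum.
    replace (psi y * sum_f_R0 (green_term d2 alpha x y tau) N - Gamma d2 alpha x y tau * psi y)
      with (- (psi y * (Gamma d2 alpha x y tau - sum_f_R0 (green_term d2 alpha x y tau) N)))
      by ring.
    rewrite Rabs_Ropp, Rabs_mult.
    replace (C * q ^ N)
      with (M * (2 / PI * exp (- alpha * tau) * q ^ S N / (1 - q)))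
      by (unfold C; simpl; field; lra).
    apply Rmult_le_compat; auto using Rabs_pos.
    + apply Rlt_le, (HM y Hy).
    + apply Gamma_sub_partial_sum; auto.
  - exists Phi. split; auto. intros N.
    replace (PI * C * q ^ N) with ((PI - 0) * (C * q ^ N)) by ring. apply Hbound.
Qed.

Lemma is_RInt_RInt_Gamma :
  is_RInt (fun x => RInt (fun y => Gamma d2 alpha x y tau * psi y) 0 PI) 0 PI
    (exp (- alpha * tau) * RInt psi 0 PI).
Proof.
  destruct RInt_Gamma_mul_geom_approx as [C HC].
  pose proof (exp_neg_mul_bounds d2 tau Hd2 Htau) as Hq.
  set (u := fun n => green_weight d2 alpha tau n * cos_coef psi n).
  destruct (is_RInt_geom_unif_limit
              (fun N x => sum_f_R0 (fun n => u n * cos (INR n * x)) N)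
              (fun x => RInt (fun y => Gamma d2 alpha x y tau * psi y) 0 PI)
              (fun _ => u 0%nat * PI)
              0 PI C (exp (- d2 * tau))) as [L [HL Hbound]]; auto.
  - pose proof PI_RGT_0; lra.
  - intros N. apply is_RInt_cos_poly.
  - intros N x _. destruct (HC x) as [Phi [HPhi HN]].
    rewrite (is_RInt_unique _ _ _ _ HPhi). apply HN.
  - assert (HL0 : u 0%nat * PI - L = 0).
    { apply (Rabs_le_geom_eq0 _ ((PI - 0) * C) (exp (- d2 * tau)) Hq). intros n.
      rewrite Rmult_assoc. apply Hbound. }
    replace (exp (- alpha * tau) * RInt psi 0 PI) with L; auto.
    assert (Hcoef0 : cos_coef psi 0 = RInt psi 0 PI).
    { apply RInt_ext. intros y _. simpl. rewrite Rmult_0_l, cos_0. ring. }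
    unfold u, green_weight, green_coef in HL0. rewrite Hcoef0 in HL0. simpl in HL0.
    replace (- (d2 * (0 * (0 * 1)) + alpha) * tau) with (- alpha * tau) in HL0 by ring.
    field_simplify in HL0; [lra | pose proof PI_RGT_0; lra].
Qed.

End NeumannMass.

Lemma principal_eigenpair_char_eq (alpha beta b d d2 tau s : R) (psi : R -> R) :
  0 < d2 -> 0 < tau ->
  principal_eigenpair alpha beta b d d2 tau s psi ->
  s = - alpha + exp (- s * tau) * (b * beta / d * exp (- alpha * tau)).
Proof.
  intros Hd2 Htau (Hdiff & Hcont2 & Hpos & Hleft & Hright & Heq).
  pose proof PI_RGT_0 as HPI.
  assert (Hsegment : forall y, Rmin 0 PI <= y <= Rmax 0 PI -> 0 <= y <= PI)
    by (intros y; rewrite Rmin_left, Rmax_right; lra).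
  assert (Hcont : forall y, 0 <= y <= PI -> continuous psi y)
    by (intros y Hy; apply (ex_derive_continuous psi), (Hdiff y Hy)).
  set (I := RInt psi 0 PI).
  assert (HI : 0 < I) by (apply RInt_gt_0; auto; intros y Hy; apply Hpos; lra).
  assert (Hpsi : is_RInt psi 0 PI I).
  { apply (@RInt_correct R_CompleteNormedModule), (@ex_RInt_continuous R_CompleteNormedModule).
    auto. }
  assert (Hdiffusion : is_RInt (Derive_n psi 2) 0 PI 0).
  { assert (Hex : ex_RInt (Derive_n psi 2) 0 PI)
      by (apply (@ex_RInt_continuous R_CompleteNormedModule); auto).
    apply (@RInt_correct R_CompleteNormedModule) in Hex.
    replace (RInt (Derive_n psi 2) 0 PI) with 0 in Hex; auto.
    rewrite (RInt_Derive (Derive psi)); [lra | |];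
      intros y Hy; [apply (Hdiff y) | apply (Hcont2 y)]; auto. }
  set (k := exp (- s * tau) * (b * beta / d)).
  assert (Hrhs : is_RInt (fun x => d2 * Derive_n psi 2 x - alpha * psi x
                   + k * RInt (fun y => Gamma d2 alpha x y tau * psi y) 0 PI) 0 PI
                   (d2 * 0 - alpha * I + k * (exp (- alpha * tau) * I)))
    by exact (is_RInt_plus _ _ _ _ _ _
                (is_RInt_minus _ _ _ _ _ _ (is_RInt_scal _ _ _ d2 _ Hdiffusion)
                   (is_RInt_scal _ _ _ alpha _ Hpsi))
                (is_RInt_scal _ _ _ k _ (is_RInt_RInt_Gamma d2 alpha tau psi Hd2 Htau Hcont))).
  assert (Hlhs : is_RInt (fun x => s * psi x) 0 PI (s * I))
    by exact (is_RInt_scal _ _ _ s _ Hpsi).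
  apply (is_RInt_ext _ (fun x => s * psi x)) in Hrhs.
  2: { intros x Hx. rewrite Rmin_left, Rmax_right in Hx by lra. symmetry. apply Heq, Hx. }
  apply (@is_RInt_unique R_CompleteNormedModule) in Hlhs.
  apply (@is_RInt_unique R_CompleteNormedModule) in Hrhs.
  apply (Rmult_eq_reg_r I); [|lra].
  unfold k in Hrhs. lra.
Qed.

Lemma delay_root_sign (alpha L tau s : R) : 0 <= L -> 0 <= tau ->
  s = - alpha + exp (- s * tau) * L ->
  (0 < s <-> 0 < - alpha + L) /\ (s = 0 <-> - alpha + L = 0) /\ (s < 0 <-> - alpha + L < 0).
Proof.
  intros HL Htau Hs.
  assert (Hpos : 0 < s -> s <= - alpha + L).
  { intros Hs0. assert (exp (- s * tau) <= 1) by (rewrite <- exp_0; apply exp_le_mono; nra).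
    nra. }
  assert (Hneg : s < 0 -> - alpha + L <= s).
  { intros Hs0. assert (1 <= exp (- s * tau)) by (rewrite <- exp_0; apply exp_le_mono; nra).
    nra. }
  assert (Hzero : s = 0 -> - alpha + L = 0).
  { intros Hs0. rewrite Hs0, Ropp_0, Rmult_0_l, exp_0 in Hs. lra. }
  destruct (Rtotal_order s 0) as [Hs0 | [Hs0 | Hs0]].
  - specialize (Hneg Hs0). lra.
  - specialize (Hzero Hs0). lra.
  - specialize (Hpos Hs0). lra.
Qed.

Theorem lemma5p2 (alpha beta b d d2 tau : R)
  (Halpha : 0 < alpha) (Hbeta : 0 < beta) (Hb : 0 < b) (Hd : 0 < d)
  (Hd2 : 0 < d2) (Htau : 0 < tau)
  (s : R) (psi : R -> R)
  (Hpr : principal_eigenpair alpha beta b d d2 tau s psi) :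
  let lambda1 := - alpha + beta * b / (d * exp (alpha * tau)) in
  (0 < s <-> 0 < lambda1) /\ (s = 0 <-> lambda1 = 0) /\ (s < 0 <-> lambda1 < 0).
Proof.
  intros lambda1.
  assert (HL : beta * b / (d * exp (alpha * tau)) = b * beta / d * exp (- alpha * tau)).
  { replace (- alpha * tau) with (- (alpha * tau)) by ring. rewrite exp_Ropp.
    field. split; [apply Rgt_not_eq, exp_pos | lra]. }
  unfold lambda1. rewrite HL.
  apply (delay_root_sign _ _ tau); [| lra |].
  - apply Rmult_le_pos; [|apply Rlt_le, exp_pos].
    apply Rlt_le, Rdiv_lt_0_compat; [apply Rmult_lt_0_compat|]; auto.
  - apply (principal_eigenpair_char_eq _ _ _ _ d2 _ _ psi); auto.
Qed.
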